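(* (a) $P_4$ divides $Q_5$. (b) $P_4$ divides $Q_7$. (c) $P_8$ divides $Q_9$. (d) $P_8$ divides $Q_{11}$.
   Context: $Q_q$ denotes the $q$-dimensional hypercube graph (vertices are $q$-tuples of $0$'s and $1$'s, adjacent iff they differ in exactly one coordinate). $P_m$ denotes the path with $m$ edges. For graphs $H$ and $G$, ''$H$ divides $G$'' means there is a collection of subgraphs $H_i$ of $G$, each isomorphic to $H$, such that $E(G)$ is the disjoint union of the edge sets $E(H_i)$. *)

(* Simple graphs are symmetric irreflexive relations on a finType. *)
From mathcomp Require Import all_boot all_order.
Set Implicit Arguments. Unset Strict Implicit. Unset Printing Implicit Defensive.

Definition hypercube (q : nat) : rel {ffun 'I_q -> bool} :=
  fun x y => #|[set i | x i != y i]| == 1.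

Definition path_graph (m : nat) : rel 'I_m.+1 :=
  fun i j => (i.+1 == j :> nat) || (j.+1 == i :> nat).

Definition edges (T : finType) (e : rel T) : {set {set T}} :=
  [set [set p.1; p.2] | p in [set p : T * T | e p.1 p.2]].

(* f is an injective homomorphism from (TH,eH) to (TG,eG); its image is a
   subgraph of G isomorphic to H, and every such subgraph arises this way. *)
Definition embedding (TH TG : finType) (eH : rel TH) (eG : rel TG) (f : TH -> TG) : Prop :=
  injective f /\ (forall x y, eH x y -> eG (f x) (f y)).

Definition image_edges (TH TG : finType) (eH : rel TH) (f : TH -> TG) : {set {set TG}} :=
  [set [set f p.1; f p.2] | p in [set p : TH * TH | eH p.1 p.2]].

Definition divides (TH TG : finType) (eH : rel TH) (eG : rel TG) : Prop :=
  exists (k : nat) (F : 'I_k -> TH -> TG),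
    (forall i, embedding eH eG (F i)) /\
    (forall i j, i != j -> [disjoint image_edges eH (F i) & image_edges eH (F j)]) /\
    \bigcup_(i < k) image_edges eH (F i) = edges eG.

Arguments hypercube q : clear implicits.
Arguments path_graph m : clear implicits.

From mathcomp Require Import all_boot all_order.
Set Implicit Arguments. Unset Strict Implicit. Unset Printing Implicit Defensive.

(* An edge of Q_n is determined by its direction d and its endpoint whose d-th bit is 0.  Hence a
   family of walks of length m through pairwise distinct vertices of Q_n is a P_m-decomposition of
   Q_n as soon as the keys of their edges, listed walk by walk, form a permutation of the keys of
   all the edges of Q_n.  The decompositions are unions of translates of a few base walks by the
   kernel of a linear map from GF(2)^n onto a small space, and the criterion is decided by
   evaluation. *)

Lemma eq_set2_cases (T : finType) (a b c d : T) :
  [set a; b] = [set c; d] -> (a = c /\ b = d) \/ (a = d /\ b = c).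
Proof.
move=> e.
have c_ab : c \in [set a; b] by rewrite e set21.
have d_ab : d \in [set a; b] by rewrite e set22.
have b_cd : b \in [set c; d] by rewrite -e set22.
have /set2P[ac|ad] : a \in [set c; d] by rewrite -e set21.
- subst a; case/set2P: b_cd => [bc|]; last by left.
  by left; move: d_ab; rewrite bc setUid => /set1P.
- subst a; case/set2P: b_cd => [|bd]; first by right.
  by right; move: c_ab; rewrite bd setUid => /set1P.
Qed.

Lemma uniq_flatten_nth (T : eqType) (ss : seq (seq T)) i j x :
  uniq (flatten ss) -> i < size ss -> j < size ss ->
  x \in nth [::] ss i -> x \in nth [::] ss j -> i = j.
Proof.
elim: ss i j => [|s ss IH] // [|i] [|j] //=.
all: rewrite cat_uniq => /and3P[_ /hasPn ss_s ss_uniq].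
- move=> _ lt_j xs x_ssj; suff /ss_s : x \in flatten ss by rewrite xs.
  by apply/flattenP; exists (nth [::] ss j); rewrite ?mem_nth.
- move=> lt_i _ x_ssi xs; suff /ss_s : x \in flatten ss by rewrite xs.
  by apply/flattenP; exists (nth [::] ss i); rewrite ?mem_nth.
- by move=> lt_i lt_j x_ssi x_ssj; congr _.+1; apply: IH.
Qed.

Definition flip_bit (s : seq bool) (d : nat) : seq bool :=
  set_nth false s d (~~ nth false s d).

Fixpoint bit_seqs (k : nat) : seq (seq bool) :=
  if k is k'.+1 then [seq b :: s | b <- [:: false; true], s <- bit_seqs k'] else [:: [::]].

Lemma mem_bit_seqs k s : (s \in bit_seqs k) = (size s == k).
Proof.
elim: k s => [|k IH] [|b s] //.
  by apply/negbTE/allpairsP => -[[? ?] [_ _]].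
apply/allpairsP/idP => [[[b' s'] [_ /= s'_k [_ ->]]]|].
  by rewrite /= eqSS -IH.
by rewrite /= eqSS -IH => s_k; exists (b, s); case: b.
Qed.

Lemma uniq_bit_seqs k : uniq (bit_seqs k).
Proof. by elim: k => // k IH; apply: allpairs_uniq => // -[? ?] [? ?] _ _ [-> ->]. Qed.

Section Hypercube.
Variable n : nat.
Local Notation vertex := {ffun 'I_n -> bool}.

Definition vertex_of (s : seq bool) : vertex := [ffun i : 'I_n => nth false s i].

(* The key (c, d) stands for the edge in direction d whose endpoint with bit d clear is c. *)
Definition key_edge (k : seq bool * nat) : {set vertex} :=
  [set vertex_of k.1; vertex_of (set_nth false k.1 k.2 true)].

Definition edge_key (s : seq bool) (d : nat) : seq bool * nat := (set_nth false s d false, d).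

Definition hypercube_keys : seq (seq bool * nat) :=
  [seq k <- [seq (s, d) | d <- iota 0 n, s <- bit_seqs n] | ~~ nth false k.1 k.2].

Lemma vertex_of_inj s t : size s = n -> size t = n -> vertex_of s = vertex_of t -> s = t.
Proof.
move=> s_n t_n st; apply: (@eq_from_nth _ false) => [|i]; first by rewrite s_n t_n.
by rewrite s_n => lt_i_n; have := congr1 (fun x : vertex => x (Ordinal lt_i_n)) st; rewrite !ffunE.
Qed.

Lemma vertex_of_fgraph (x : vertex) : vertex_of (fgraph x) = x.
Proof. by apply/ffunP => i; rewrite ffunE nth_fgraph_ord. Qed.

Lemma vertex_of_flip_bit s (d i : 'I_n) :
  vertex_of (flip_bit s d) i = (if i == d then ~~ nth false s d else nth false s i).
Proof. by rewrite ffunE nth_set_nth. Qed.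

Lemma hypercube_sym : symmetric (hypercube n).
Proof.
by move=> x y; rewrite /hypercube; congr (_ == 1); apply: eq_card => i; rewrite !inE eq_sym.
Qed.

Lemma hypercube_flip_bit s (d : 'I_n) : hypercube n (vertex_of s) (vertex_of (flip_bit s d)).
Proof.
rewrite /hypercube (_ : [set i | _] = [set d]) ?cards1 //; apply/setP => i.
by rewrite !inE vertex_of_flip_bit ffunE; case: (eqVneq i d) => [->|]; case: nth.
Qed.

Lemma hypercube_flip_bit_exists (x y : vertex) :
  hypercube n x y -> exists d : 'I_n, y = vertex_of (flip_bit (fgraph x) d).
Proof.
case/cards1P => d xy_d; exists d; apply/ffunP => i.
move/setP/(_ i): xy_d; rewrite vertex_of_flip_bit !nth_fgraph_ord !inE.
case: (eqVneq i d) => [->|_]; rewrite /=.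
- by case: (x d); case: (y d).
- by case: (x i); case: (y i).
Qed.

Lemma key_edge_flip_bit s d :
  key_edge (edge_key s d) = [set vertex_of s; vertex_of (flip_bit s d)].
Proof.
rewrite /key_edge /flip_bit /=; case s_d: (nth false s d) => /=; [rewrite setUC|].
all: congr [set _; _]; apply/ffunP => i; rewrite !ffunE !nth_set_nth /=.
all: by case: ifP => [/eqP id_d|ne]; [subst d; rewrite ?s_d|rewrite ?nth_set_nth /= ?ne].
Qed.

Lemma mem_hypercube_keys c d :
  ((c, d) \in hypercube_keys) = [&& size c == n, d < n & ~~ nth false c d].
Proof.
rewrite mem_filter andbC; case: (nth false c d); rewrite ?andbF ?andbT //.
apply/allpairsP/andP => [[[d' c'] /= [d'_n c'_n [-> ->]]]|[c_n d_n]].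
  by rewrite mem_iota in d'_n; rewrite -mem_bit_seqs c'_n.
by exists (d, c); rewrite /= mem_iota mem_bit_seqs.
Qed.

Lemma uniq_hypercube_keys : uniq hypercube_keys.
Proof.
apply/filter_uniq/allpairs_uniq; rewrite ?iota_uniq ?uniq_bit_seqs //.
by move=> [? ?] [? ?] _ _ [-> ->].
Qed.

Lemma key_edge_inj : {in hypercube_keys &, injective key_edge}.
Proof.
move=> [c d] [c' d']; rewrite !mem_hypercube_keys /key_edge /=.
move=> /and3P[/eqP c_n d_n /negbTE c_d] /and3P[/eqP c'_n _ _].
have at_d (x : vertex) y : x = y -> x (Ordinal d_n) = y (Ordinal d_n) by move->.
case/eq_set2_cases => [[/vertex_of_inj-/(_ c_n c'_n) <- /at_d]|[/at_d c_top' /at_d top_c']].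
  by rewrite !ffunE !nth_set_nth /= eqxx c_d; case: eqP => [->|].
by move: c_top' top_c'; rewrite !ffunE !nth_set_nth /= eqxx c_d; case: eqP => // _ <-.
Qed.

Lemma edges_hypercube : edges (hypercube n) = [set E in map key_edge hypercube_keys].
Proof.
apply/setP => E; rewrite inE; apply/imsetP/mapP => [[[x y]]|[[c d] k_in ->]].
  rewrite inE /= => /hypercube_flip_bit_exists[d ->] ->; exists (edge_key (fgraph x) d).
    have x_n : size (fgraph x) = n by rewrite size_tuple card_ord.
    rewrite mem_hypercube_keys size_set_nth x_n (maxn_idPr (ltn_ord d)).
    by rewrite ltn_ord nth_set_nth /= !eqxx.
  by rewrite (key_edge_flip_bit (fgraph x) d) vertex_of_fgraph.
move: k_in; rewrite mem_hypercube_keys => /and3P[_ d_n /negbTE c_d].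
exists (vertex_of c, vertex_of (flip_bit c d)).
  by rewrite inE (hypercube_flip_bit c (Ordinal d_n)).
by rewrite /key_edge /flip_bit c_d.
Qed.

End Hypercube.

Definition walk (p : seq bool * seq nat) (j : nat) : seq bool := foldl flip_bit p.1 (take j p.2).

Lemma walkS p j : j < size p.2 -> walk p j.+1 = flip_bit (walk p j) (nth 0 p.2 j).
Proof. by move=> lt_j; rewrite /walk (take_nth 0 lt_j) foldl_rcons. Qed.

Lemma size_foldl_flip_bit s ds :
  all (fun d => d < size s) ds -> size (foldl flip_bit s ds) = size s.
Proof.
elim: ds s => [|d ds IH] s //= /andP[lt_d ds_s].
suff size_s : size (flip_bit s d) = size s by rewrite IH size_s.
by rewrite size_set_nth (maxn_idPr lt_d).
Qed.

Section Walks.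
Variables n m : nat.

Definition walk_ok (p : seq bool * seq nat) : bool :=
  [&& size p.1 == n, size p.2 == m, all (fun d => d < n) p.2 & uniq (mkseq (walk p) m.+1)].

Definition walk_keys (p : seq bool * seq nat) : seq (seq bool * nat) :=
  mkseq (fun j => edge_key (walk p j) (nth 0 p.2 j)) m.

Definition walk_vertex (p : seq bool * seq nat) (j : 'I_m.+1) : {ffun 'I_n -> bool} :=
  vertex_of n (walk p j).

Section ValidWalk.
Variable p : seq bool * seq nat.
Hypothesis p_ok : walk_ok p.

Lemma size_walk j : size (walk p j) = n.
Proof.
case/and4P: p_ok => /eqP s_n _ ds_n _; rewrite -s_n; apply: size_foldl_flip_bit.
by rewrite s_n; apply/allP => d /mem_take; apply: (allP ds_n).
Qed.

Lemma key_edge_walk j : j < m ->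
  key_edge n (edge_key (walk p j) (nth 0 p.2 j)) =
    [set vertex_of n (walk p j); vertex_of n (walk p j.+1)].
Proof. by case/and4P: p_ok => _ /eqP ds_m _ _ lt_j; rewrite key_edge_flip_bit walkS ?ds_m. Qed.

Lemma walk_embedding : embedding (path_graph m) (hypercube n) (walk_vertex p).
Proof.
case/and4P: p_ok => _ /eqP ds_m /allP ds_n /mkseq_uniqP walk_inj; split.
  move=> j1 j2 /vertex_of_inj-/(_ (size_walk _) (size_walk _)) eq_walk.
  by apply/val_inj/walk_inj; rewrite ?inE /=.
have step j : j < m -> hypercube n (vertex_of n (walk p j)) (vertex_of n (walk p j.+1)).
  move=> lt_j; have d_n : nth 0 p.2 j < n by apply/ds_n/mem_nth; rewrite ds_m.
  by rewrite walkS ?ds_m //; apply: (hypercube_flip_bit _ (Ordinal d_n)).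
move=> j1 j2 /orP[] /eqP j12; rewrite /walk_vertex -j12; last rewrite hypercube_sym.
all: by rewrite step // -ltnS j12.
Qed.

Lemma image_edges_walk :
  image_edges (path_graph m) (walk_vertex p) = [set E in map (key_edge n) (walk_keys p)].
Proof.
have nth_keys j : j < m -> nth set0 (map (key_edge n) (walk_keys p)) j =
    [set vertex_of n (walk p j); vertex_of n (walk p j.+1)].
  by move=> lt_j; rewrite (nth_map ([::], 0)) ?size_mkseq // nth_mkseq // key_edge_walk.
have edge_in j : j < m ->
    [set vertex_of n (walk p j); vertex_of n (walk p j.+1)] \in map (key_edge n) (walk_keys p).
  by move=> lt_j; rewrite -nth_keys // mem_nth // size_map size_mkseq.
apply/setP => E; rewrite inE; apply/imsetP/idP => [[[j1 j2]]|].
  rewrite inE /path_graph /= => /orP[] /eqP j12 ->; rewrite /walk_vertex.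
    by rewrite -j12 edge_in // -ltnS j12.
  by rewrite setUC -j12 edge_in // -ltnS j12.
case/(nthP set0) => j; rewrite size_map size_mkseq => lt_j <-.
exists (Ordinal (ltnW lt_j : j < m.+1), Ordinal (lt_j : j.+1 < m.+1)).
  by rewrite inE /path_graph /= eqxx.
by rewrite nth_keys.
Qed.

End ValidWalk.

Lemma divides_of_walks (P : seq (seq bool * seq nat)) :
  all walk_ok P -> perm_eq (flatten (map walk_keys P)) (hypercube_keys n) ->
  divides (path_graph m) (hypercube n).
Proof.
move=> /all_nthP P_ok keys_P; pose walk_i i := nth ([::], [::]) P i.
have keys_i (i : 'I_(size P)) : image_edges (path_graph m) (walk_vertex (walk_i i)) =
    [set E in map (key_edge n) (walk_keys (walk_i i))] by rewrite image_edges_walk ?P_ok.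
have key_in (i : 'I_(size P)) k : k \in walk_keys (walk_i i) -> k \in hypercube_keys n.
  move=> k_i; rewrite -(perm_mem keys_P); apply/flatten_mapP.
  by exists (walk_i i); rewrite ?mem_nth.
exists (size P), (fun i => walk_vertex (walk_i i)); split; [|split].
- by move=> i; apply/walk_embedding/P_ok.
- move=> i j ij; rewrite !keys_i; apply/pred0P => E /=; rewrite !inE.
  apply/negbTE/andP => -[/mapP[k ki ->] /mapP[k' kj eq_k]].
  have k_k' : k = k' by apply: (@key_edge_inj n) => //; [apply: key_in ki | apply: key_in kj].
  subst k'; case/eqP: ij; apply: val_inj.
  apply: (@uniq_flatten_nth _ (map walk_keys P) _ _ k);
    rewrite ?size_map ?(nth_map ([::], [::])) ?ltn_ord //.
  by rewrite (perm_uniq keys_P) uniq_hypercube_keys.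
rewrite edges_hypercube; apply/setP => E; rewrite inE -(perm_mem (perm_map (key_edge n) keys_P)).
apply/bigcupP/mapP => [[i _]|[k /flatten_mapP[q /(nthP ([::], [::]))[i lt_i <-] k_i] ->]].
  rewrite keys_i inE => /mapP[k k_i ->]; exists k => //.
  by apply/flatten_mapP; exists (walk_i i); rewrite ?mem_nth.
by exists (Ordinal lt_i) => //; rewrite keys_i inE map_f.
Qed.

End Walks.

(* Any relation would be sound here; a total order just makes the permutation test fast. *)
Definition key_le (a b : seq bool * nat) : bool := ((a : seqlexi bool *l nat) <= b)%O.

Definition walk_decomposition (n m : nat) (P : seq (seq bool * seq nat)) : bool :=
  all (walk_ok n m) P &&
  (sort key_le (flatten (map (walk_keys m) P)) == sort key_le (hypercube_keys n)).

Lemma divides_of_walk_decomposition n m P :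
  walk_decomposition n m P -> divides (path_graph m) (hypercube n).
Proof.
case/andP => P_ok /eqP sort_keys; apply: (divides_of_walks P_ok).
by rewrite -(perm_sort key_le) sort_keys perm_sort.
Qed.

(* Each walk (x, ds) of a base entry (v, ds) starts at a vertex x whose image under the
   GF(2)-linear map sending the i-th unit vector to the bit vector [images]_i is v, so the
   decomposition is invariant under translation by the kernel of that map. *)
Definition syndrome (images : seq nat) (x : seq bool) : nat :=
  foldl Nat.lxor 0 [seq v.2 | v <- zip x images & v.1].

Definition coset_walks (n : nat) (images : seq nat) (base : seq (nat * seq nat)) :
    seq (seq bool * seq nat) :=
  [seq (x, b.2) | b <- base, x <- [seq x <- bit_seqs n | syndrome images x == b.1]].

Lemma P4_divides_Q5 : divides (path_graph 4) (hypercube 5).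
Proof.
apply: (@divides_of_walk_decomposition 5 4 (coset_walks 5 [:: 7; 4; 6; 1; 2]
  [:: (1, [:: 2; 1; 3; 1]); (0, [:: 1; 4; 2; 4]); (5, [:: 4; 0; 3; 1]); (4, [:: 2; 0; 3; 0]);
      (7, [:: 3; 0; 4; 2])])).
by vm_compute.
Qed.

Lemma P4_divides_Q7 : divides (path_graph 4) (hypercube 7).
Proof.
apply: (@divides_of_walk_decomposition 7 4 (coset_walks 7 [:: 7; 4; 6; 1; 2; 3; 5]
  [:: (6, [:: 5; 3; 0; 1]); (2, [:: 3; 5; 6; 1]); (2, [:: 6; 2; 5; 0]); (4, [:: 6; 4; 6; 1]);
      (2, [:: 2; 4; 2; 3]); (2, [:: 4; 0; 3; 0]); (3, [:: 2; 4; 5; 1])])).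
by vm_compute.
Qed.

Lemma P8_divides_Q9 : divides (path_graph 8) (hypercube 9).
Proof.
apply: (@divides_of_walk_decomposition 9 8 (coset_walks 9 [:: 4; 1; 9; 12; 14; 3; 15; 11; 8]
  [:: (10, [:: 7; 8; 1; 6; 5; 8; 0; 5]); (5, [:: 6; 1; 2; 6; 3; 0; 4; 3]);
      (2, [:: 0; 6; 4; 8; 1; 8; 3; 2]); (13, [:: 8; 2; 1; 0; 7; 3; 7; 5]);
      (0, [:: 4; 0; 8; 1; 3; 0; 7; 8]); (10, [:: 5; 3; 1; 6; 8; 6; 4; 5]);
      (9, [:: 2; 0; 3; 4; 2; 4; 1; 6]); (14, [:: 6; 2; 7; 0; 1; 7; 2; 4]);
      (12, [:: 3; 5; 4; 5; 2; 7; 5; 7])])).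
by vm_compute.
Qed.

Lemma P8_divides_Q11 : divides (path_graph 8) (hypercube 11).
Proof.
apply: (@divides_of_walk_decomposition 11 8 (coset_walks 11 [:: 4; 10; 9; 3; 6; 14; 8; 2; 5; 1; 15]
  [:: (6, [:: 3; 2; 9; 7; 9; 2; 5; 1]); (12, [:: 7; 1; 7; 6; 0; 9; 2; 10]);
      (1, [:: 0; 1; 3; 10; 3; 7; 4; 3]); (14, [:: 4; 6; 9; 8; 5; 7; 3; 8]);
      (9, [:: 3; 1; 0; 9; 8; 5; 10; 1]); (8, [:: 9; 7; 10; 2; 0; 6; 5; 2]);
      (14, [:: 3; 4; 0; 8; 6; 1; 5; 9]); (15, [:: 4; 2; 10; 6; 4; 2; 8; 1]);
      (4, [:: 6; 1; 8; 9; 3; 7; 4; 10]); (0, [:: 4; 10; 8; 0; 10; 0; 6; 5]);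
      (6, [:: 0; 5; 4; 2; 5; 6; 7; 8])])).
by vm_compute.
Qed.

Theorem proposition5 :
  divides (path_graph 4) (hypercube 5) /\
  divides (path_graph 4) (hypercube 7) /\
  divides (path_graph 8) (hypercube 9) /\
  divides (path_graph 8) (hypercube 11).
Proof.
split; first exact: P4_divides_Q5.
split; first exact: P4_divides_Q7.
by split; [exact: P8_divides_Q9 | exact: P8_divides_Q11].
Qed.
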